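(* Let $G$ be a finite group, $\mathcal H=(E,p,B,\tau)$ a $G$-Hilbert bundle and $\Gamma=\{\gamma_{b',b}\}_{b,b'\in B}$ a $G$-equivariant connection on $\mathcal H$ with multiplier $\mu_\Gamma$. Fix $b\in B$ and put $V_b=E_b$ (as a Hilbert space) and, for $g\in G$ and $v\in V_b$, $$\rho^b_g(v)=\gamma_{b,\tau^B_g(b)}\big(\tau^E_g(v)\big).$$ Then each $\rho^b_g$ is a unitary operator on $V_b$ and $(V_b,\rho^b)$ is a projective unitary representation of $G$ satisfying $\rho^b_g\rho^b_h=c(g,h)\,\rho^b_{gh}$ for all $g,h\in G$, with 2-cocycle $$c(g,h)=\mu_\Gamma(b,\ g.b,\ gh.b)\qquad(g,h\in G).$$ In particular, if $\Gamma$ is flat, then $\rho^b$ is a true (linear) representation of $G$.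
   Context: A $G$-Hilbert bundle $\mathcal H=(E,p,B,\tau)$ consists of finite sets $E$ (total space) and $B$ (base), a surjection $p:E\to B$, and actions $\tau=(\tau^E,\tau^B)$ of the finite group $G$ on $E$ and on $B$ with $p\circ\tau^E_g=\tau^B_g\circ p$ for all $g\in G$; each fiber $E_b=p^{-1}(b)$ is a finite-dimensional complex Hilbert space with inner product $\langle\ ,\ \rangle$, and each $\tau^E_g$ restricts to a unitary linear map $E_b\to E_{g.b}$. One writes $g.v=\tau^E_g(v)$, $g.b=\tau^B_g(b)$. A $G$-equivariant connection on $\mathcal H$ is a family $\Gamma=\{\gamma_{b',b}:E_b\to E_{b'}\}_{b,b'\in B}$ of linear isomorphisms such that for all $b,b',b''\in B$, $g\in G$: (i) $\langle\gamma_{b',b}f,\gamma_{b',b}h\rangle=\langle f,h\rangle$ for $f,h\in E_b$; (ii) $\langle\gamma_{b',b}f,h\rangle=\langle f,\gamma_{b,b'}h\rangle$ for $f\in E_b$, $h\in E_{b'}$; (iii) $\gamma_{b,b'}\circ\gamma_{b',b}=\gamma_{b,b}=\mathrm{id}_{E_b}$; (iv) $\gamma_{b'',b'}\circ\gamma_{b',b}=\mu_\Gamma(b'',b',b)\,\gamma_{b'',b}$ for a function $\mu_\Gamma:B\times B\times B\to\mathbb C^\times$ (the multiplier of $\Gamma$); (v) $\tau_g\circ\gamma_{b',b}=\gamma_{g.b',g.b}\circ\tau_g$. The connection is flat if $\mu_\Gamma\equiv1$. *)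

From HB Require Import structures.
From mathcomp Require Import all_boot all_order all_algebra all_fingroup.
Set Implicit Arguments. Unset Strict Implicit. Unset Printing Implicit Defensive.
Import Order.TTheory GRing.Theory Num.Theory.
Local Open Scope ring_scope.

(* Scalars: C : numClosedFieldType (a numeric algebraically closed field with
   complex conjugation x^*; e.g. algC).  The fiber E_b over b : B is modelled
   as the Hilbert space C^(n b) of column vectors 'cV[C]_(n b) with the
   standard inner product.  A linear map E_b -> E_b' is a matrix
   'M[C]_(n b', n b) acting on the left of column vectors. *)

Definition ip (C : numClosedFieldType) (m : nat) (u v : 'cV[C]_m) : C :=
  \sum_(i < m) u i 0 * (v i 0)^*.

Definition unitary_map (C : numClosedFieldType) (k m : nat) (T : 'M[C]_(k, m)) : Prop :=
  (forall u v : 'cV[C]_m, ip (T *m u) (T *m v) = ip u v) /\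
  (exists S : 'M[C]_(m, k), S *m T = 1%:M /\ T *m S = 1%:M).

Definition lin_iso (C : numClosedFieldType) (k m : nat) (T : 'M[C]_(k, m)) : Prop :=
  exists S : 'M[C]_(m, k), S *m T = 1%:M /\ T *m S = 1%:M.

Definition is_GHilbert_bundle (C : numClosedFieldType) (gT : finGroupType)
    (B : finType) (n : B -> nat) (tauB : gT -> B -> B)
    (tauE : forall (g : gT) (b : B), 'M[C]_(n (tauB g b), n b)) : Prop :=
  ((forall b, tauB 1%g b = b) /\
      (forall g h b, tauB (g * h)%g b = tauB g (tauB h b)) /\
      (forall b (e : tauB 1%g b = b),
          castmx (congr1 n e, erefl (n b)) (tauE 1%g b) = 1%:M) /\
      (forall g h b (e : tauB g (tauB h b) = tauB (g * h)%g b),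
          castmx (congr1 n e, erefl (n b)) (tauE g (tauB h b) *m tauE h b)
          = tauE (g * h)%g b)
    /\ (forall g b, unitary_map (tauE g b))).

Definition is_equiv_connection (C : numClosedFieldType) (gT : finGroupType)
    (B : finType) (n : B -> nat) (tauB : gT -> B -> B)
    (tauE : forall (g : gT) (b : B), 'M[C]_(n (tauB g b), n b))
    (gam : forall b' b : B, 'M[C]_(n b', n b)) (mu : B -> B -> B -> C) : Prop :=
  ((forall b' b, lin_iso (gam b' b)) /\
      (forall b' b (f h : 'cV[C]_(n b)),
          ip (gam b' b *m f) (gam b' b *m h) = ip f h) /\
      (forall b' b (f : 'cV[C]_(n b)) (h : 'cV[C]_(n b')),
          ip (gam b' b *m f) h = ip f (gam b b' *m h)) /\
      (forall b' b, gam b b' *m gam b' b = 1%:M /\ gam b b = 1%:M) /\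
      (forall b'' b' b, gam b'' b' *m gam b' b = mu b'' b' b *: gam b'' b
                        /\ mu b'' b' b != 0)
    /\ (forall g b' b, tauE g b' *m gam b' b = gam (tauB g b') (tauB g b) *m tauE g b)).

Definition flat_connection (C : numClosedFieldType) (B : finType)
    (mu : B -> B -> B -> C) : Prop :=
  forall b'' b' b, mu b'' b' b = 1.

Definition rho (C : numClosedFieldType) (gT : finGroupType)
    (B : finType) (n : B -> nat) (tauB : gT -> B -> B)
    (tauE : forall (g : gT) (b : B), 'M[C]_(n (tauB g b), n b))
    (gam : forall b' b : B, 'M[C]_(n b', n b)) (b : B) (g : gT) : 'M[C]_(n b) :=
  gam b (tauB g b) *m tauE g b.

From Pilot Require Import Defs.
From HB Require Import structures.
From mathcomp Require Import all_boot all_order all_algebra all_fingroup.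
Import Order.TTheory GRing.Theory Num.Theory.
Local Open Scope ring_scope.

(* rho^b_g goes from E_b to E_(g.b) by the action and back by the connection,
   a composite of unitaries.  In rho^b_g rho^b_h, equivariance moves tau^E_g
   past gamma_(b,h.b), leaving gamma_(b,g.b) gamma_(g.b,gh.b) tau^E_g tau^E_h
   = mu(b, g.b, gh.b) rho^b_(gh).  The cocycle identity for the scalars then
   comes from associativity of the operators, since they are invertible. *)

Lemma mulmx_castmx_index {C : pzRingType} {I : Type} {n : I -> nat} {m k : nat}
    (F : forall i, 'M[C]_(m, n i)) {x y : I} (e : x = y) (M : 'M[C]_(n x, k)) :
  F x *m M = F y *m castmx (congr1 n e, erefl k) M.
Proof. by case: y / e; rewrite castmx_id. Qed.

Lemma unitary_map_mul (C : numClosedFieldType) (k l m : nat)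
    (S : 'M[C]_(k, l)) (T : 'M[C]_(l, m)) :
  unitary_map S -> unitary_map T -> unitary_map (S *m T).
Proof.
move=> [ipS [S' [S'S SS']]] [ipT [T' [T'T TT']]]; split.
  by move=> u v; rewrite -!mulmxA ipS ipT.
exists (T' *m S'); split.
  by rewrite -mulmxA (mulmxA S') S'S mul1mx.
by rewrite -mulmxA (mulmxA T) TT' mul1mx.
Qed.

Lemma lin_iso_scalemx_inj (C : numClosedFieldType) (m : nat) (M : 'M[C]_m)
    (a a' : C) :
  (0 < m)%N -> lin_iso M -> a *: M = a' *: M -> a = a'.
Proof.
move=> m_gt0 [S [SM _]] /(congr1 (mulmx S)).
rewrite -!scalemxAr SM => /matrixP /(_ (Ordinal m_gt0) (Ordinal m_gt0)).
by rewrite !mxE eqxx /= !mulr1n !mulr1.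
Qed.

Lemma projective_rep_cocycle (C : numClosedFieldType) (gT : finGroupType)
    (m : nat) (r : gT -> 'M[C]_m) (c : gT -> gT -> C) :
  (0 < m)%N -> (forall g, lin_iso (r g)) ->
  (forall g h, r g *m r h = c g h *: r (g * h)%g) ->
  forall g h k, c g h * c (g * h)%g k = c h k * c g (h * k)%g.
Proof.
move=> m_gt0 r_iso r_mul g h k.
apply: (@lin_iso_scalemx_inj _ _ (r (g * h * k)%g)) => //.
have := mulmxA (r g) (r h) (r k).
rewrite r_mul -scalemxAr r_mul r_mul -scalemxAl r_mul mulgA !scalerA.
by move=> ->; rewrite mulrC.
Qed.

Section ConnectionRepresentation.

Context {C : numClosedFieldType} {gT : finGroupType} {B : finType}.
Context {n : B -> nat} {tauB : gT -> B -> B}.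
Context {tauE : forall (g : gT) (b : B), 'M[C]_(n (tauB g b), n b)}.
Context {gam : forall b' b : B, 'M[C]_(n b', n b)} {mu : B -> B -> B -> C}.
Hypothesis HH : is_GHilbert_bundle tauE.
Hypothesis HG : is_equiv_connection tauE gam mu.
Variable b : B.

Local Notation rho := (rho tauE gam b).

Lemma connection_unitary b' b'' : unitary_map (gam b' b'').
Proof. by case: HG => [iso [isom _]]; split; [apply: isom | apply: iso]. Qed.

Lemma rho_unitary g : unitary_map (rho g).
Proof.
apply: unitary_map_mul; first exact: connection_unitary.
by case: HH => _ [_ [_ []]].
Qed.

Lemma multiplier_neq0 b1 b2 b3 : mu b1 b2 b3 != 0.
Proof. by case: HG => [_ [_ [_ [_ [gam_mu _]]]]]; case: (gam_mu b1 b2 b3). Qed.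

Lemma rho1 : rho 1%g = 1%:M.
Proof.
case: HH => [act1 [_ [tau1 _]]]; case: HG => [_ [_ [_ [gam_inv _]]]].
rewrite /Defs.rho (mulmx_castmx_index (gam b) (act1 b)) tau1 mulmx1.
exact: (proj2 (gam_inv b b)).
Qed.

Lemma rho_mul g h :
  rho g *m rho h = mu b (tauB g b) (tauB (g * h)%g b) *: rho (g * h)%g.
Proof.
case: HH => [_ [actM [_ [tauM _]]]]; case: HG => [_ [_ [_ [_ [gam_mu gam_eq]]]]].
have e : tauB g (tauB h b) = tauB (g * h)%g b by rewrite actM.
rewrite /Defs.rho -mulmxA (mulmxA (tauE g b)) gam_eq !mulmxA.
rewrite (proj1 (gam_mu _ _ _)) -!mulmxA -scalemxAl.
by rewrite (mulmx_castmx_index (gam b) e) (tauM g h b e) -actM.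
Qed.

End ConnectionRepresentation.

Theorem mainTheorem1 (C : numClosedFieldType) (gT : finGroupType)
    (B : finType) (n : B -> nat) (tauB : gT -> B -> B)
    (tauE : forall (g : gT) (b : B), 'M[C]_(n (tauB g b), n b))
    (gam : forall b' b : B, 'M[C]_(n b', n b)) (mu : B -> B -> B -> C)
    (HH : is_GHilbert_bundle tauE)
    (HG : is_equiv_connection tauE gam mu)
    (b : B) :
  let c := fun g h : gT => mu b (tauB g b) (tauB (g * h)%g b) in
  ((forall g, unitary_map (rho tauE gam b g)) /\
      rho tauE gam b 1%g = 1%:M /\
      (forall g h, rho tauE gam b g *m rho tauE gam b h
                   = c g h *: rho tauE gam b (g * h)%g) /\
      (forall g h, c g h != 0) /\
      ((0 < n b)%N -> forall g h k, c g h * c (g * h)%g k = c h k * c g (h * k)%g)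
    /\ (flat_connection mu ->
        forall g h, rho tauE gam b g *m rho tauE gam b h = rho tauE gam b (g * h)%g)).
Proof.
move=> c; have rho_mul_c := rho_mul HH HG b.
split; first exact: rho_unitary HH HG b.
split; first exact: rho1 HH HG b.
split; first exact: rho_mul_c.
split; first by move=> g h; apply: multiplier_neq0 HG _ _ _.
split.
  move=> nb_gt0; apply: projective_rep_cocycle nb_gt0 _ rho_mul_c.
  by move=> g; case: (rho_unitary HH HG b g).
by move=> flat g h; rewrite rho_mul_c /c flat scale1r.
Qed.
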